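(* Fix $\mathbf{s} \in \mathcal{S}$. Then, for any decreasing positive sequence $\{\epsilon_l : l \in \mathbb{N}\}$ with $\lim_{l \to \infty} \epsilon_l = 0$, we have $\lim_{l \to \infty} \bar{\mathbf{p}}^{\epsilon_l}(\mathbf{s}) = \bar{\mathbf{p}}(\mathbf{s})$.
   Context: There are $N$ systems $\mathcal{A} = \{1,\ldots,N\}$. $B = [b_{i,j}]$ is a nonnegative $N\times N$ matrix with $b_{i,j} = \beta_{j,i} \ge 0$, $\beta_{i,i}=0$; the directed graph with an edge $(i,j)$ iff $\beta_{i,j}>0$ is weakly connected (not necessarily strongly connected). $\boldsymbol{\lambda} \in \mathbb{R}_+^N$ is the vector of external attack rates (some entries may be zero), $\boldsymbol{\delta} > \mathbf{0}$ the recovery rates, and $\mathbf{q}(\mathbf{s}) = (q_i(s_i))_i$ the breach probabilities with each $q_i:\mathbb{R}_+\to(0,1]$ decreasing, strictly convex, continuously differentiable; $\mathcal{S}\subset\mathbb{R}_+^N$ is convex. The state evolves by $\dot{\mathbf{p}}(t) = (\mathbf{1} - \mathbf{p}(t)) \circ \mathbf{q}(\mathbf{s}) \circ (\boldsymbol{\lambda} + B \mathbf{p}(t)) - \boldsymbol{\delta} \circ \mathbf{p}(t)$ ($\circ$ elementwise), and for fixed $\mathbf{s}$ this system has a unique stable equilibrium $\bar{\mathbf{p}}(\mathbf{s})$, which satisfies $(\mathbf{1} - \mathbf{p}) \circ (\boldsymbol{\lambda} + B \mathbf{p}) - \mathbf{q}(\mathbf{s})^{-1} \circ \boldsymbol{\delta}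 \circ \mathbf{p} = \mathbf{0}$ (this equation may have multiple solutions). For $\epsilon>0$, $\bar{\mathbf{p}}^{\epsilon}(\mathbf{s}) > \mathbf{0}$ is the unique strictly positive solution of the same equation with $\boldsymbol{\lambda}$ replaced by $\boldsymbol{\lambda}^{\epsilon} := \boldsymbol{\lambda} + \epsilon\mathbf{1}$. *)

From HB Require Import structures.
From mathcomp Require Import all_boot all_order all_algebra.
From mathcomp Require Import all_classical all_reals all_analysis.
Set Implicit Arguments. Unset Strict Implicit. Unset Printing Implicit Defensive.
Import Order.TTheory GRing.Theory Num.Theory.
Import numFieldNormedType.Exports.
Local Open Scope classical_set_scope.
Local Open Scope ring_scope.

Section SIS.
Variables (R : realType) (N : nat).

(* B i j = b_{i,j} = beta_{j,i}. *)
Definition sis_field (B : 'I_N -> 'I_N -> R) (lam del : 'I_N -> R)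
  (q : 'I_N -> R -> R) (s : 'I_N -> R) (p : 'I_N -> R) : 'I_N -> R :=
  fun i => (1 - p i) * q i (s i) * (lam i + \sum_(j < N) B i j * p j) - del i * p i.

Definition eq_equation (B : 'I_N -> 'I_N -> R) (lam del : 'I_N -> R)
  (q : 'I_N -> R -> R) (s : 'I_N -> R) (p : 'I_N -> R) : Prop :=
  forall i, (1 - p i) * (lam i + \sum_(j < N) B i j * p j)
            - (q i (s i))^-1 * del i * p i = 0.

Definition in_unit_cube (p : 'I_N -> R) : Prop := forall i, 0 <= p i <= 1.

Definition is_solution (B : 'I_N -> 'I_N -> R) (lam del : 'I_N -> R)
  (q : 'I_N -> R -> R) (s : 'I_N -> R) (x : R -> 'I_N -> R) : Prop :=
  forall i, {within `[0, +oo[, continuous (fun t => x t i)} /\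
    forall t : R, 0 < t ->
      is_derive t 1 (fun u => x u i) (sis_field B lam del q s (x t) i).

Definition is_equilibrium (B : 'I_N -> 'I_N -> R) (lam del : 'I_N -> R)
  (q : 'I_N -> R -> R) (s : 'I_N -> R) (p : 'I_N -> R) : Prop :=
  in_unit_cube p /\ forall i, sis_field B lam del q s p i = 0.

(* Local asymptotic stability (Lyapunov stability + local attractivity),
   relative to the state space [0,1]^N. *)
Definition is_stable_equilibrium (B : 'I_N -> 'I_N -> R) (lam del : 'I_N -> R)
  (q : 'I_N -> R -> R) (s : 'I_N -> R) (p : 'I_N -> R) : Prop :=
  is_equilibrium B lam del q s p /\
  (forall e : R, 0 < e -> exists2 d : R, 0 < d &
     forall x, is_solution B lam del q s x -> in_unit_cube (x 0) ->
       (forall i, `|x 0 i - p i| < d) ->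
       forall t : R, 0 <= t -> forall i, `|x t i - p i| < e) /\
  (exists2 d : R, 0 < d &
     forall x, is_solution B lam del q s x -> in_unit_cube (x 0) ->
       (forall i, `|x 0 i - p i| < d) ->
       forall i, (fun t => x t i) @ +oo --> p i).

(* The directed graph with edge (i,j) iff beta_{i,j} = B j i > 0 is weakly
   connected: its underlying undirected graph is connected. *)
Definition weakly_connected (B : 'I_N -> 'I_N -> R) : Prop :=
  forall i j : 'I_N, connect (fun a b => (0 < B b a) || (0 < B a b)) i j.

End SIS.

From HB Require Import structures.
From mathcomp Require Import all_boot all_order all_algebra.
From mathcomp Require Import all_classical all_reals all_analysis.
From mathcomp Require Import ring lra.
Import Order.TTheory GRing.Theory Num.Theory.
Import numFieldNormedType.Exports.
Local Open Scope classical_set_scope.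
Local Open Scope ring_scope.

(* Write c_i = q_i(s_i) > 0.  Positive equilibria of the system with external
   rates lam + e are strictly increasing in e, so pbar_eps(eps_l) decreases to
   a limit ps, which is again an equilibrium, now for the rates lam.  The
   system is cooperative, so strict sub- and supersolutions bound solutions
   from below and above (a first-touching-time argument).  The supersolutions
   pbar_eps(eps_l) and (1 + K/(1 + g t)) pbar_eps(eps_l) and the subsolutions
   (1 - K/(1 + g t)) ps keep every solution that starts close to ps close to
   ps and make it converge to ps.  Hence ps is a stable equilibrium, and it
   equals pbar by uniqueness. *)

Section Barrier.
Variable R : realType.

Lemma near_within_nonneg [f : R -> R] [s e : R] :
  {within `[0, +oo[, continuous f} -> 0 <= s -> 0 < e ->
  \forall u \near s, 0 <= u -> `|f s - f u| < e.
Proof.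
move=> cf s0 e0; have /cvgrPdist_lt /(_ e e0) := cf s.
rewrite {1}/nbhs /= -nbhs_subspace_in; last by rewrite /= in_itv /= s0.
by rewrite near_withinE; apply: filterS => u /[swap] u0; apply; rewrite /= in_itv /= u0.
Qed.

Lemma near_left_witness [s : R] [P : R -> Prop] :
  0 < s -> (\forall u \near s^'-, 0 <= u -> P u) ->
  exists u, [/\ 0 <= u, u < s & P u].
Proof.
move=> s0 Ps.
have : \forall u \near s^'-, [/\ 0 <= u, u < s & P u].
  near=> u; have u0 : 0 <= u by near: u; exact: nbhs_left_ge.
  have us : u < s by near: u; exact: nbhs_left_lt.
  by split=> //; apply: (near Ps u).
by case/filter_ex => u; exists u.
Unshelve. all: by end_near.
Qed.

Lemma is_derive_lt0_left [f : R -> R] [s dv : R] :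
  is_derive s 1 f dv -> dv < 0 -> \forall u \near s^'-, f s < f u.
Proof.
move=> fd dv0; rewrite nbhs_left0P.
have : (fun h => h^-1 *: ((f \o shift s) (h *: 1) - f s)) @ 0^' --> dv.
  by rewrite -(@derive_val _ _ _ _ _ _ _ fd); exact: ex_derive.
move=> /cvgr_lt /(_ _ dv0).
rewrite !near_withinE => /nbhs_ballP [d d0 near0].
near=> e => e0.
have /near0 : ball 0 d (- e).
  rewrite /ball /= sub0r opprK; near: e; exact: (@nbhs0_lt R R^o d d0).
rewrite oppr_eq0 gt_eqF // => /(_ isT) /=.
rewrite scaler1 /GRing.scale /= (addrC _ s) invrN mulNr.
by rewrite oppr_lt0 pmulr_rgt0 ?invr_gt0 // subr_gt0.
Unshelve. all: by end_near.
Qed.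

Variables (K : finType) (h : K -> R -> R).
Hypothesis h_cont : forall k, {within `[0, +oo[, continuous (h k)}.
Hypothesis h_at0 : forall k, h k 0 < 0.

Lemma first_touch [t : R] [k : K] : 0 <= t -> 0 <= h k t ->
  exists s k0, [/\ 0 < s <= t, h k0 s = 0, forall k', h k' s <= 0
    & forall u, 0 <= u -> u < s -> forall k', h k' u < 0].
Proof.
move=> t0 hkt.
pose hits := [set u | 0 <= u /\ exists k, 0 <= h k u].
have hits_t : hits t by split=> //; exists k.
have hits_ne : hits !=set0 by exists t.
pose s := inf hits.
have s_le u : hits u -> s <= u by apply: ge_inf; exists 0 => ? [].
have s_ge0 : 0 <= s by apply: lb_le_inf => // ? [].
have before u : 0 <= u -> u < s -> forall k', h k' u < 0.
  move=> u0 us k'; rewrite ltNge; apply/negP => hu.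
  by have := s_le u (conj u0 (ex_intro _ k' hu)); rewrite leNgt us.
have [k0 hk0] : exists k0, 0 <= h k0 s.
  apply: contrapT => /boolp.forallNP neg.
  have {}neg k' : 0 < - h k' s by rewrite oppr_gt0 ltNge; apply/negP/neg.
  have /nbhs_ballP [d /= d0 near_s] : \forall u \near s,
      forall k', 0 <= u -> `|h k' s - h k' u| < - h k' s.
    by apply: (@filter_forall _ _ _ (nbhs s) _) => k'; exact: near_within_nonneg.
  suff : s + d / 2 <= s by lra.
  apply: lb_le_inf => // b hits_b; have sb := s_le b hits_b.
  case: hits_b => b0 [k' hb]; rewrite leNgt; apply/negP => bs.
  have /near_s /(_ k' b0) : ball s d b.
    by rewrite /ball /= ler0_norm ?subr_le0 //; lra.
  by move/ltr_normlP => []; lra.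
have s_gt0 : 0 < s.
  by rewrite lt_neqAle s_ge0 andbT; apply/eqP => s0; have := h_at0 k0; rewrite s0; lra.
have le0 k' : h k' s <= 0.
  rewrite leNgt; apply/negP => pos.
  have [u [u0 us]] := near_left_witness s_gt0
    (cvg_within _ (near_within_nonneg (h_cont k') s_ge0 pos)).
  by move/ltr_normlP => [_]; have := before u u0 us k'; lra.
exists s, k0; split=> //; last exact/le_anti/andP.
by rewrite s_gt0 s_le.
Qed.

Lemma barrier (T : R) :
  (forall k t, 0 < t -> t <= T -> (forall k', h k' t <= 0) -> h k t = 0 ->
     exists2 dv, is_derive t 1 (h k) dv & dv < 0) ->
  forall t, 0 <= t -> t <= T -> forall k, h k t < 0.
Proof.
move=> h_deriv t t0 tT k; rewrite ltNge; apply/negP => hkt.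
have [s [k0 [/andP [s0 st] hs le0 before]]] := first_touch t0 hkt.
have [dv hd dv0] := h_deriv k0 s s0 (le_trans st tT) le0 hs.
have [u [u0 us]] := near_left_witness s0
  (filterS (fun u hu _ => hu) (is_derive_lt0_left hd dv0)).
by rewrite hs; have := before u u0 us k0; lra.
Qed.

End Barrier.

Lemma exists_pos_lt [R : realFieldType] [I : finType] (a : I -> R) :
  (forall i, 0 < a i) -> exists2 g, 0 < g & forall i, g < a i.
Proof.
move=> a_gt0; pose m := \big[Num.min/1]_i a i.
have m_gt0 : 0 < m by apply: lt_bigmin.
exists (m / 2); first by rewrite divr_gt0.
move=> i; have : m <= a i by exact: bigmin_le.
lra.
Qed.

Lemma exists_gt [R : realFieldType] [I : finType] (a : I -> R) :
  exists M, forall i, a i < M.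
Proof.
exists (\big[Num.max/0]_i a i + 1) => i.
have : a i <= \big[Num.max/0]_i a i by exact: le_bigmax.
lra.
Qed.

Lemma is_derive_within_continuous [R : realType] [f df : R -> R] :
  (forall t : R, 0 <= t -> is_derive t 1 f (df t)) -> {within `[0, +oo[, continuous f}.
Proof.
move=> f_der; apply: continuous_in_subspaceT => t; rewrite inE /= in_itv /= andbT => t0.
apply/differentiable_continuous/derivable1_diffP.
exact: (@ex_derive _ _ _ _ _ _ _ (f_der t t0)).
Qed.

Definition decay [R : realFieldType] (g t : R) := (1 + g * t)^-1.

Lemma decay_gt0 [R : realFieldType] [g t : R] : 0 <= g -> 0 <= t -> 0 < decay g t.
Proof. by move=> g0 t0; rewrite invr_gt0 ltr_wpDr ?mulr_ge0. Qed.

Lemma decay_le1 [R : realFieldType] [g t : R] : 0 <= g -> 0 <= t -> decay g t <= 1.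
Proof. by move=> g0 t0; rewrite invf_le1 ?lerDl ?mulr_ge0 // ltr_wpDr ?mulr_ge0. Qed.

Lemma is_derive_decay_profile [R : realType] (a b : R) [g t : R] : 0 <= g -> 0 <= t ->
  is_derive t 1 (fun u => (1 + a * decay g u) * b) (a * (- g * decay g t ^+ 2) * b).
Proof.
move=> g0 t0; have dt0 : 1 + g * t != 0 by rewrite gt_eqF // ltr_wpDr ?mulr_ge0.
have lin : is_derive t 1 (fun u : R => 1 + g * u) g.
  by apply: is_derive_eq; rewrite add0r mul1r; exact: mulr1.
have dec : is_derive t 1 (decay g) (- g * decay g t ^+ 2).
  apply: is_derive_eq (@is_deriveV R (fun u => 1 + g * u) t g 1 dt0 lin) _.
  by rewrite /decay exprVn /GRing.scale /=; ring.
apply: is_derive_eq (is_deriveM (is_deriveD (is_derive_cst (1 : R) t 1)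
  (is_deriveZ a dec)) (is_derive_cst b t 1)) _.
by rewrite /= scaler0 !add0r /GRing.scale /=; ring.
Qed.

Lemma near_decay_lt [R : realType] (g r : R) :
  0 < g -> 0 < r -> \forall t \near +oo, decay g t < r.
Proof.
move=> g0 r0; near=> t.
have : g^-1 * r^-1 < t by near: t; apply: nbhs_pinfty_gt; rewrite num_real.
rewrite ltr_pdivrMl // => t_big.
have gt0 : 0 < g * t by apply: lt_trans t_big; rewrite invr_gt0.
rewrite /decay invf_plt ?posrE ?ltr_wpDl //; lra.
Unshelve. all: by end_near.
Qed.

Section Model.
Context {R : realType} {N : nat} {B : 'I_N -> 'I_N -> R} {lam del : 'I_N -> R}
  {q : 'I_N -> R -> R} {s : 'I_N -> R}.
Hypothesis B_ge0 : forall i j, 0 <= B i j.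
Hypothesis lam_ge0 : forall i, 0 <= lam i.
Hypothesis del_gt0 : forall i, 0 < del i.
Hypothesis q_gt0 : forall i, 0 < q i (s i).

Local Notation c i := (q i (s i)).
Local Notation F := (sis_field B lam del q s).

Definition Bp (p : 'I_N -> R) i := \sum_(j < N) B i j * p j.

(* [eq_equation] for the rates lam + e, multiplied through by c. *)
Definition steady (e : R) (p : 'I_N -> R) :=
  forall i, del i * p i = c i * (1 - p i) * (lam i + e + Bp p i).

Lemma eq_equation_steady [e p] :
  eq_equation B (fun i => lam i + e) del q s p -> steady e p.
Proof.
move=> E i; have /eqP := E i; rewrite subr_eq0 -/(Bp p i) => /eqP Ei.
by rewrite -mulrA Ei !mulrA mulfV ?mul1r // gt_eqF.
Qed.

Lemma sis_fieldE p i : F p i = (1 - p i) * c i * (lam i + Bp p i) - del i * p i.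
Proof. by []. Qed.

Lemma Bp_le p p' i : (forall j, p j <= p' j) -> Bp p i <= Bp p' i.
Proof. by move=> le_pp'; apply: ler_sum => j _; apply: ler_wpM2l. Qed.

Lemma Bp_ge0 p i : (forall j, 0 <= p j) -> 0 <= Bp p i.
Proof. by move=> p_ge0; apply: sumr_ge0 => j _; apply: mulr_ge0. Qed.

Lemma BpZ (k : R) p i : Bp (fun j => k * p j) i = k * Bp p i.
Proof. by rewrite /Bp mulr_sumr; apply: eq_bigr => j _; rewrite mulrCA. Qed.

Lemma sis_field_le [y z] i :
  (forall j, y j <= z j) -> y i = z i -> z i <= 1 -> F y i <= F z i.
Proof.
move=> le_yz yz z1; rewrite !sis_fieldE yz lerD2r; apply: ler_wpM2l.
  by apply: mulr_ge0; [rewrite subr_ge0 | exact/ltW].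
by rewrite lerD2l; apply: Bp_le.
Qed.

Lemma steady_lt1 [e p] : 0 <= e -> (forall j, 0 <= p j) -> steady e p -> forall i, p i < 1.
Proof.
move=> e0 p0 Ep i; have E := Ep i; rewrite ltNge; apply/negP => p1.
have : c i * (1 - p i) * (lam i + e + Bp p i) <= 0.
  apply: mulr_le0_ge0; first by rewrite pmulr_rle0 // subr_le0.
  by rewrite !addr_ge0 ?(Bp_ge0 p i p0).
by rewrite -E pmulr_rle0 // leNgt (lt_le_trans ltr01 p1).
Qed.

Lemma sis_field_steady [e p] i : steady e p -> F p i = - (c i * (1 - p i) * e).
Proof. by move=> Ep; rewrite sis_fieldE (Ep i); ring. Qed.

Lemma sis_field_steady_scale [e p k] i :
  0 <= e -> steady e p -> (forall j, 0 <= p j) -> p i <= 1 -> 1 <= k ->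
  F (fun j => k * p j) i <= - (c i * (1 - p i) * e).
Proof.
move=> e0 Ep p0 p1 k1; rewrite sis_fieldE BpZ (mulrCA (del i)) Ep.
have S0 := Bp_ge0 p i p0; have := q_gt0 i; have := lam_ge0 i; have := p0 i.
set S := Bp p i; set ci := c i; set l := lam i; set pi := p i => pi0 l0 ci0.
rewrite -subr_le0 opprK.
have -> : (1 - k * pi) * ci * (l + k * S) - k * (ci * (1 - pi) * (l + e + S))
    + ci * (1 - pi) * e = - (ci * (k - 1) * (l + k * pi * S + e * (1 - pi))) by ring.
have k0 : 0 <= k by exact: le_trans ler01 k1.
rewrite oppr_le0 mulr_ge0 ?mulr_ge0 ?subr_ge0 //; first exact/ltW.
by rewrite !addr_ge0 ?mulr_ge0 ?subr_ge0.
Qed.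

Lemma sis_field_steady0_scale p k i :
  steady 0 p -> F (fun j => k * p j) i = c i * (1 - k) * (lam i + k * p i * Bp p i).
Proof. by move=> Ep; rewrite sis_fieldE BpZ (mulrCA (del i)) Ep addr0; ring. Qed.

Lemma steady_scaled_no_touch [e1 e2 x y t] k :
  0 <= e1 -> e1 < e2 -> (forall j, 0 <= x j) -> (forall j, 0 < y j) ->
  steady e1 x -> steady e2 y -> 1 <= t -> (forall j, x j <= t * y j) ->
  x k <> t * y k.
Proof.
move=> e10 e12 x0 y0 Ex Ey t1 le_xty xk.
have x1 : x k < 1 by exact: steady_lt1 e10 x0 Ex k.
have Bx : Bp x k <= t * Bp y k by rewrite -BpZ; apply: Bp_le.
have By := Bp_ge0 y k (fun j => ltW (y0 j)).
have := Ex k; have := Ey k; rewrite xk in x1 *.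
have := q_gt0 k; have := lam_ge0 k; have := y0 k.
set a := lam k; set cc := c k; set yk := y k; set Sx := Bp x k; set Sy := Bp y k.
move=> yk0 a0 cc0 E2 E1.
have lt_sides : (1 - t * yk) * (a + e1 + Sx) < (1 - yk) * (t * (a + e2 + Sy)).
  apply: (@le_lt_trans _ _ ((1 - t * yk) * (a + e1 + t * Sy))).
    by rewrite ler_wpM2l ?subr_ge0 ?lerD2l //; exact: ltW.
  apply: (@lt_le_trans _ _ ((1 - t * yk) * (t * (a + e2 + Sy)))).
    by rewrite ltr_pM2l ?subr_gt0 //; nra.
  by rewrite ler_wpM2r ?lerD2l ?lerN2 ?ler_peMl ?(ltW yk0) // mulr_ge0 ?addr_ge0 //; lra.
have : cc * ((1 - t * yk) * (a + e1 + Sx)) = cc * ((1 - yk) * (t * (a + e2 + Sy))).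
  by rewrite !mulrA -E1 mulrCA E2; ring.
by move/(mulfI (lt0r_neq0 cc0)) => eq; rewrite eq ltxx in lt_sides.
Qed.

Lemma steady_lt_mono [e1 e2 x y] :
  0 <= e1 -> e1 < e2 -> (forall j, 0 <= x j) -> (forall j, 0 < y j) ->
  steady e1 x -> steady e2 y -> forall i, x i < y i.
Proof.
move=> e10 e12 x0 y0 Ex Ey i.
pose ratio j := x j / y j.
have [k _ tk] := @eq_bigmax _ _ _ 0 i predT ratio isT
  (fun j _ => divr_ge0 (x0 j) (ltW (y0 j))).
set t := \big[Order.max/0]_(j | predT j) ratio j in tk.
have xE j : x j = ratio j * y j by rewrite /ratio divfK ?gt_eqF.
have le_xty j : x j <= t * y j.
  by rewrite xE ler_pM2r //; apply: le_bigmax_cond.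
have [t1|t1] := ltP t 1.
  by rewrite (le_lt_trans (le_xty i)) // gtr_pMl.
by case: (steady_scaled_no_touch k e10 e12 x0 y0 Ex Ey t1 le_xty); rewrite xE tk.
Qed.

(* Only the components in [A] are compared strictly; the others are known
   a priori to stay below [x]. *)
Lemma subsolution_below (A : pred 'I_N) (x v v' : R -> 'I_N -> R) (T : R) :
  is_solution B lam del q s x ->
  (forall i, A i -> {within `[0, +oo[, continuous (fun t => v t i)}) ->
  (forall t i, 0 < t -> t <= T -> A i -> is_derive t 1 (fun u => v u i) (v' t i)) ->
  (forall t i, 0 <= t -> t <= T -> ~~ A i -> v t i <= x t i) ->
  (forall t i, 0 < t -> t <= T -> A i -> v t i <= 1 /\ v' t i < F (v t) i) ->
  (forall i, A i -> v 0 i < x 0 i) ->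
  forall t, 0 <= t -> t <= T -> forall i, A i -> v t i < x t i.
Proof.
move=> x_sol v_cont v_der v_passive v_sub v0 t t0 tT i Ai.
pose h (k : {i | A i}) u := v u (val k) - x u (val k).
suff : h (exist _ i Ai) t < 0 by rewrite subr_lt0.
apply: (@barrier _ _ h _ _ T) => //= [[k Ak]|[k Ak]|[k Ak] u u0 uT h_le0 h_eq0] /=.
- exact: within_continuousB (v_cont k Ak) (x_sol k).1.
- by rewrite subr_lt0 v0.
have [v1 v'_lt] := v_sub u k u0 uT Ak.
exists (v' u k - F (x u) k).
  exact: is_deriveB (v_der u k u0 uT Ak) ((x_sol k).2 u u0).
have le_vx j : v u j <= x u j.
  have [Aj|Aj] := boolP (A j); last exact: v_passive (ltW u0) uT Aj.
  by have := h_le0 (exist _ j Aj); rewrite subr_le0.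
have vx : v u k = x u k by apply/eqP; rewrite -subr_eq0; apply/eqP.
have := sis_field_le k le_vx vx; rewrite -vx => /(_ v1); lra.
Qed.

Lemma supersolution_above (x v v' : R -> 'I_N -> R) :
  is_solution B lam del q s x ->
  (forall i, {within `[0, +oo[, continuous (fun t => v t i)}) ->
  (forall (t : R) i, 0 < t -> is_derive t 1 (fun u => v u i) (v' t i)) ->
  (forall t i, 0 < t -> x t i = v t i -> v t i <= 1) ->
  (forall t i, 0 < t -> F (v t) i < v' t i) ->
  (forall i, x 0 i < v 0 i) ->
  forall t, 0 <= t -> forall i, x t i < v t i.
Proof.
move=> x_sol v_cont v_der v1 v_super v0 t t0 i.
pose h (k : 'I_N) (u : R) := x u k - v u k.
suff : h i t < 0 by rewrite subr_lt0.
apply: (@barrier _ _ h _ _ t) => // [k|k|k u u0 _ h_le0 h_eq0].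
- exact: within_continuousB (x_sol k).1 (v_cont k).
- by rewrite subr_lt0 v0.
exists (F (x u) k - v' u k); first exact: is_deriveB ((x_sol k).2 u u0) (v_der u k u0).
have le_xv j : x u j <= v u j by have := h_le0 j; rewrite subr_le0.
have xv : x u k = v u k by apply/eqP; rewrite -subr_eq0; apply/eqP.
have := sis_field_le k le_xv xv (v1 u k u0 xv); have := v_super u k u0; lra.
Qed.

Lemma sis_field_neg_cst_gt (a M : R) i :
  0 < a -> a <= 1 -> 1 + 2 * (c i * Bp (fun _ => 1) i) < M ->
  - (M * a) < F (fun _ => - a) i.
Proof.
move=> a0 a1 Mi; have S0 : 0 <= Bp (fun _ => 1) i by apply: Bp_ge0.
rewrite sis_fieldE; have -> : Bp (fun _ => - a) i = - a * Bp (fun _ => 1) i.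
  by rewrite -BpZ; apply: eq_bigr => j _; rewrite mulr1.
move: Mi S0 (q_gt0 i) (del_gt0 i) (lam_ge0 i).
set ci := c i; set S := Bp (fun _ => 1) i => Mi S0 c0 d0 l0.
have : 0 <= (1 + a) * ci * lam i by rewrite !mulr_ge0 ?addr_ge0 //; lra.
have aS0 : 0 <= a * (ci * S) by rewrite !mulr_ge0 //; lra.
have : (1 + a) * (a * (ci * S)) <= 2 * (a * (ci * S)) by rewrite ler_wpM2r //; lra.
have : a * (2 * (ci * S)) < a * (M - 1) by rewrite ltr_pM2l //; lra.
have : 0 < del i * a by rewrite mulr_gt0.
nra.
Qed.

Lemma solution_nonneg [x] :
  is_solution B lam del q s x -> (forall i, 0 <= x 0 i) ->
  forall t, 0 <= t -> forall i, 0 <= x t i.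
Proof.
move=> x_sol x0 T T0 i; apply/ler_addgt0Pr => r r0.
(* With a(t) = r' e^(M (t - T)), the constant vector -a(t) is a subsolution on
   [0, T], and a(T) = r' <= r. *)
have [M M_gt] := exists_gt (fun j => 1 + 2 * (c j * Bp (fun _ => 1) j)).
have M_gt1 : 1 < M.
  by apply: le_lt_trans (M_gt i); rewrite lerDl !mulr_ge0 ?Bp_ge0 // ltW.
pose r' := Num.min r 1.
have r'0 : 0 < r' by rewrite lt_min r0 ltr01.
pose a (u : R) := r' * expR (- (M * T)) * expR (M * u).
have a_gt0 u : 0 < a u by rewrite !mulr_gt0 ?expR_gt0.
have a_le1 u : u <= T -> a u <= 1.
  move=> uT; rewrite /a -mulrA -expRD.
  have r'1 : r' <= 1 by rewrite /r' ge_min lexx orbT.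
  have e1 : expR (- (M * T) + M * u) <= 1 by rewrite -expR0 ler_expR; nra.
  by have := ler_pM (ltW r'0) (expR_ge0 _) r'1 e1; rewrite mulr1.
have a_der (u : R) : is_derive u 1 (fun u => - a u) (- (M * a u)).
  by apply: is_derive_eq; rewrite /a /GRing.scale /= mulr1; ring.
have lower : forall t, 0 <= t -> t <= T -> forall j, predT j -> - a t < x t j.
  apply: (@subsolution_below predT x _ (fun u _ => - (M * a u))) => //
    [j _|u j u0 uT _|j _].
  - exact: is_derive_within_continuous (fun u _ => a_der u).
  - by split; [have := a_gt0 u; lra | exact: sis_field_neg_cst_gt (a_le1 u uT) (M_gt j)].
  - by have := a_gt0 0; have := x0 j; lra.
have aT : a T = r' by rewrite /a -mulrA -expRD addNr expR0 mulr1.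
have : r' <= r by rewrite /r' ge_min lexx.
by have := lower T T0 (lexx T) i isT; rewrite aT; lra.
Qed.

Lemma steady_upper_bound [e P x] :
  0 < e -> steady e P -> (forall j, 0 <= P j) -> is_solution B lam del q s x ->
  (forall j, x 0 j < P j) -> forall t, 0 <= t -> forall j, x t j < P j.
Proof.
move=> e0 EP P0 x_sol x0P.
have P1 j : P j < 1 by exact: steady_lt1 (ltW e0) P0 EP j.
apply: (@supersolution_above x (fun _ => P) (fun _ _ => 0)) => // [j|t j _|t j _ _|t j _].
- by apply: continuous_subspaceT; exact: cst_continuous.
- exact: is_derive_cst.
- exact: ltW.
by rewrite (sis_field_steady j EP) oppr_lt0 !mulr_gt0 // subr_gt0.
Qed.

Lemma steady_upper_decay [e P K x] :
  0 < e -> 0 < K -> steady e P -> (forall j, 0 < P j) -> is_solution B lam del q s x ->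
  (forall t j, 0 < t -> x t j <= 1) -> (forall j, x 0 j < (1 + K) * P j) ->
  exists2 g, 0 < g & forall t, 0 <= t -> forall j, x t j < (1 + K * decay g t) * P j.
Proof.
move=> e0 K0 EP P0 x_sol x1 x0P.
have P0' j : 0 <= P j by exact: ltW.
have P1 j : P j < 1 by exact: steady_lt1 (ltW e0) P0' EP j.
have [g g0 g_lt] : exists2 g, 0 < g & forall j, g < c j * (1 - P j) * e / K.
  by apply: exists_pos_lt => j; rewrite divr_gt0 ?mulr_gt0 ?subr_gt0.
exists g => //.
apply: (@supersolution_above x _ (fun t j => K * (- g * decay g t ^+ 2) * P j))
  => // [j|t j t0|t j t0 <-|t j t0|j].
- exact: is_derive_within_continuous (fun t => is_derive_decay_profile K (P j) (ltW g0)).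
- by apply: is_derive_decay_profile; exact: ltW.
- exact: x1.
- have d0 := decay_gt0 (ltW g0) (ltW t0); have d1 := decay_le1 (ltW g0) (ltW t0).
  have k1 : 1 <= 1 + K * decay g t by rewrite lerDl mulr_ge0 // ltW.
  apply: le_lt_trans (sis_field_steady_scale j (ltW e0) EP P0' (ltW (P1 j)) k1) _.
  have := g_lt j; rewrite ltr_pdivlMr // => gK.
  have : g * K * (decay g t ^+ 2 * P j) <= g * K.
    rewrite ler_piMr ?mulr_ge0 ?(ltW g0) ?(ltW K0) //.
    by rewrite -[1]mul1r ler_pM ?sqr_ge0 ?P0' // ?expr_le1 ?(ltW d0) ?(ltW (P1 j)).
  nra.
by rewrite /decay mulr0 addr0 invr1 mulr1.
Qed.

Lemma steady0_lower_decay [ps K x] :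
  steady 0 ps -> (forall j, 0 <= ps j) -> 0 < K -> K <= 1 / 2 ->
  is_solution B lam del q s x -> (forall t, 0 <= t -> forall j, 0 <= x t j) ->
  (forall j, 0 < ps j -> (1 - K) * ps j < x 0 j) ->
  exists2 g, 0 < g & forall t, 0 <= t -> forall j, 0 < ps j ->
    (1 - K * decay g t) * ps j < x t j.
Proof.
move=> Eps ps0 K0 K2 x_sol x_ge0 x0ps.
have ps1 j : ps j < 1 by exact: steady_lt1 (lexx 0) ps0 Eps j.
have Bps0 j : 0 <= ps j * Bp ps j by rewrite mulr_ge0 ?Bp_ge0.
pose kap j := lam j + ps j * Bp ps j.
have kap_gt0 j : 0 < ps j -> 0 < kap j.
  move=> psj; have := Eps j; rewrite addr0 => E.
  have : 0 < c j * (1 - ps j) * (lam j + Bp ps j) by rewrite -E mulr_gt0.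
  rewrite pmulr_rgt0 ?mulr_gt0 ?subr_gt0 // => pos.
  have : ps j * (lam j + Bp ps j) <= kap j.
    by rewrite mulrDr lerD2r ler_piMl ?lam_ge0 ?ltW.
  by apply: lt_le_trans; rewrite mulr_gt0.
have [g g0 g_lt] : exists2 g, 0 < g &
    forall j : {j | 0 < ps j}, g < c (val j) * kap (val j) / 2.
  by apply: exists_pos_lt => -[j psj]; rewrite divr_gt0 ?mulr_gt0 ?kap_gt0.
exists g => // t t0 j psj; rewrite -mulNr.
apply: (@subsolution_below (fun j => 0 < ps j) x (fun t j => (1 + - K * decay g t) * ps j)
  (fun t j => - K * (- g * decay g t ^+ 2) * ps j) t x_sol) => //
  [k _|u k u0 _ _|u k u0 _ psk|u k u0 _ psk|k psk].
- exact: is_derive_within_continuous (fun t => is_derive_decay_profile (- K) (ps k) (ltW g0)).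
- by apply: is_derive_decay_profile; exact: ltW.
- have -> : ps k = 0 by apply/le_anti; rewrite ps0 andbT leNgt.
  by rewrite mulr0 x_ge0.
- have d0 := decay_gt0 (ltW g0) (ltW u0); have d1 := decay_le1 (ltW g0) (ltW u0).
  set d := decay g u in d0 d1 *.
  have mu_half : 1 / 2 <= 1 + - K * d by rewrite mulNr; nra.
  split; first by have := ps1 k; have := ps0 k; nra.
  rewrite sis_field_steady0_scale //.
  have := g_lt (exist _ k psk); rewrite /= => gk.
  set mu := 1 + - K * d in mu_half *.
  have Kd0 : 0 < K * d by rewrite mulr_gt0.
  have h1 : kap k / 2 <= lam k + mu * ps k * Bp ps k.
    by have := lam_ge0 k; have := Bps0 k; rewrite /kap -mulrA; nra.
  have h2 : d ^+ 2 * ps k <= d.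
    have := ps1 k; have := ps0 k => ??.
    have : d * ps k <= 1 by nra.
    by rewrite expr2 -mulrA; nra.
  have e1 : K * g * (d ^+ 2 * ps k) <= K * g * d.
    by rewrite ler_wpM2l // mulr_ge0 // ltW.
  have e2 : K * d * g < K * d * (c k * kap k / 2) by rewrite ltr_pM2l.
  have e3 : K * d * (c k * kap k / 2) <= K * d * (c k * (lam k + mu * ps k * Bp ps k)).
    by rewrite ler_wpM2l ?(ltW Kd0) // -mulrA ler_wpM2l // ltW.
  rewrite /mu; rewrite /mu in e3; lra.
by rewrite /decay mulr0 addr0 invr1 mulr1 x0ps.
Qed.

Lemma Bp_cvg (T : Type) (F : set_system T) {FF : Filter F} (p : T -> 'I_N -> R) p0 i :
  (forall j, (fun l => p l j) @ F --> p0 j) -> (fun l => Bp (p l) i) @ F --> Bp p0 i.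
Proof.
move=> p_cvg; apply: (cvg_big add_continuous) => j _.
exact: cvgM (cvg_cst _) (p_cvg j).
Qed.

Lemma steady_cvg [eps : nat -> R] [P : nat -> 'I_N -> R] [p e] :
  (forall l, steady (eps l) (P l)) -> eps @ \oo --> e ->
  (forall j, (fun l => P l j) @ \oo --> p j) -> steady e p.
Proof.
move=> EP eps_cvg P_cvg i.
have lhs : (fun l => del i * P l i) @ \oo --> del i * p i.
  exact: cvgM (cvg_cst _) (P_cvg i).
have : (fun l => del i * P l i) @ \oo --> c i * (1 - p i) * (lam i + e + Bp p i).
  rewrite (boolp.funext (fun l => EP l i)).
  apply: cvgM; first exact: cvgM (cvg_cst _) (cvgB (cvg_cst _) (P_cvg i)).
  by apply: cvgD; [apply: cvgD => //; exact: cvg_cst | exact: Bp_cvg].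
exact: cvg_unique lhs.
Qed.

Lemma steady_seq_limit [eps : nat -> R] [P : nat -> 'I_N -> R] :
  (forall l, 0 < eps l) -> (forall l, eps l.+1 < eps l) -> eps @ \oo --> 0 ->
  (forall l, steady (eps l) (P l)) -> (forall l j, 0 < P l j) ->
  exists ps, [/\ steady 0 ps, forall j, 0 <= ps j, forall l j, ps j < P l j
    & forall j, (fun l => P l j) @ \oo --> ps j].
Proof.
move=> eps_gt0 eps_dec eps_cvg EP P_gt0.
have P_dec l j : P l.+1 j < P l j.
  exact: steady_lt_mono (ltW (eps_gt0 _)) (eps_dec l) (fun j => ltW (P_gt0 _ j)) (P_gt0 l)
    (EP _) (EP _) j.
pose ps j := inf (range (fun l => P l j)).
have P_lb j : has_lbound (range (fun l => P l j)) by exists 0 => _ [l _ <-]; exact: ltW.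
have P_cvg j : (fun l => P l j) @ \oo --> ps j.
  by apply: nonincreasing_cvgn => //; apply/nonincreasing_seqP => l; exact: ltW.
exists ps; split => // [|j|l j]; first exact: steady_cvg EP eps_cvg P_cvg.
  by apply: lb_le_inf; [exists (P 0%N j), 0%N | move=> _ [l _ <-]; exact: ltW].
by apply: le_lt_trans (P_dec l j); apply: (ge_inf (P_lb j)); exists l.+1.
Qed.

Section SteadyLimit.
Context {ps : 'I_N -> R} {eps : nat -> R} {P : nat -> 'I_N -> R}.
Hypothesis Eps : steady 0 ps.
Hypothesis ps_ge0 : forall j, 0 <= ps j.
Hypothesis eps_gt0 : forall l, 0 < eps l.
Hypothesis EP : forall l, steady (eps l) (P l).
Hypothesis ps_lt_P : forall l j, ps j < P l j.
Hypothesis P_cvg : forall j, (fun l => P l j) @ \oo --> ps j.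

Let P_gt0 l j : 0 < P l j := le_lt_trans (ps_ge0 j) (ps_lt_P l j).
Let ps_lt1 : forall j, ps j < 1 := steady_lt1 (lexx 0) ps_ge0 Eps.

Lemma exists_steady_close [r] : 0 < r -> exists l, forall j, P l j < ps j + r.
Proof.
move=> r0; have : \forall l \near \oo, forall j, `|ps j - P l j| < r.
  by apply: filter_forall => j; move/cvgrPdist_lt : (P_cvg j) => /(_ r r0).
by case/filter_ex => l close; exists l => j; have /ltr_normlP [] := close j; lra.
Qed.

Lemma initial_box l [K] : 0 < K -> exists2 d, 0 < d & forall y : 'I_N -> R,
  (forall j, `|y j - ps j| < d) ->
  (forall j, y j < P l j) /\ (forall j, 0 < ps j -> (1 - K) * ps j < y j).
Proof.
move=> K0.
have [d1 d10 d1P] : exists2 d, 0 < d & forall j, d < P l j - ps j.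
  by apply: exists_pos_lt => j; rewrite subr_gt0.
have [d2 d20 d2P] : exists2 d, 0 < d & forall j : {j | 0 < ps j}, d < K * ps (val j).
  by apply: exists_pos_lt => -[j psj]; rewrite mulr_gt0.
exists (Num.min d1 d2) => [|y near_y]; first by rewrite lt_min d10.
have m1 : Num.min d1 d2 <= d1 by rewrite ge_min lexx.
have m2 : Num.min d1 d2 <= d2 by rewrite ge_min lexx orbT.
split=> [j|j psj]; have /ltr_normlP [lo hi] := near_y j.
  by have := d1P j; lra.
by have := d2P (exist _ j psj); rewrite /= mulrBl mul1r; lra.
Qed.

Lemma steady_limit_lyapunov [e] : 0 < e -> exists2 d, 0 < d & forall x,
  is_solution B lam del q s x -> (forall j, 0 <= x 0 j) ->
  (forall j, `|x 0 j - ps j| < d) -> forall t, 0 <= t -> forall j, `|x t j - ps j| < e.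
Proof.
move=> e0; have [l Pl] := exists_steady_close e0.
pose K := Num.min (1 / 2) e.
have K0 : 0 < K by rewrite lt_min e0 andbT.
have K2 : K <= 1 / 2 by rewrite ge_min lexx.
have Ke : K <= e by rewrite ge_min lexx orbT.
have [d d0 box] := initial_box l K0.
exists d => // x x_sol x0 near_x t t0 j; have [x0P x0ps] := box _ near_x.
have x_ge0 := solution_nonneg x_sol x0.
have xP := steady_upper_bound (eps_gt0 l) (EP l) (fun j => ltW (P_gt0 l j)) x_sol x0P
  t t0 j.
have [g g0 lower] := steady0_lower_decay Eps ps_ge0 K0 K2 x_sol x_ge0 x0ps.
rewrite ltr_norml; apply/andP; split; last by have := Pl j; lra.
have [psj|] := ltP 0 (ps j); last by have := x_ge0 t t0 j; lra.
have := lower t t0 j psj; have := decay_le1 (ltW g0) t0; have := decay_gt0 (ltW g0) t0.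
set dt := decay g t => dt0 dt1; have := ps_lt1 j => ps1.
have : K * (dt * ps j) <= K * 1 by rewrite ler_wpM2l ?(ltW K0) //; nra.
lra.
Qed.

Lemma steady_limit_attractive : exists2 d, 0 < d & forall x,
  is_solution B lam del q s x -> (forall j, 0 <= x 0 j) ->
  (forall j, `|x 0 j - ps j| < d) -> forall j, (fun t => x t j) @ +oo --> ps j.
Proof.
have half0 : 0 < 1 / 2 :> R by rewrite divr_gt0.
have [d d0 box] := initial_box 0 half0.
exists d => // x x_sol x0 near_x j; have [x0P x0ps] := box _ near_x.
have x_ge0 := solution_nonneg x_sol x0.
have x_lt_P0 := steady_upper_bound (eps_gt0 0) (EP 0) (fun j => ltW (P_gt0 0 j)) x_sol x0P.
have x_le1 t k : 0 < t -> x t k <= 1.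
  move=> t0; apply: ltW (lt_trans (x_lt_P0 t (ltW t0) k) _).
  by apply: steady_lt1 (ltW (eps_gt0 0)) _ (EP 0) k => i; exact/ltW/P_gt0.
have [g2 g20 lower] := steady0_lower_decay Eps ps_ge0 half0 (lexx _) x_sol x_ge0 x0ps.
apply/cvgrPdist_lt => e e0.
have [l Pl] := exists_steady_close (divr_gt0 e0 (ltr0n _ 2)).
have [k k0 kP] : exists2 k, 0 < k & forall i, k < P l i / P 0%N i.
  by apply: exists_pos_lt => i; rewrite divr_gt0 ?P_gt0.
have x0Pl i : x 0 i < (1 + k^-1) * P l i.
  apply: lt_trans (x0P i) _; have := kP i; rewrite ltr_pdivlMr ?P_gt0 // => kP0.
  have : P 0%N i < k^-1 * P l i by rewrite ltr_pdivlMl.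
  by have := P_gt0 l i; lra.
have ik0 : 0 < k^-1 by rewrite invr_gt0.
have [g1 g10 upper] := steady_upper_decay (eps_gt0 l) ik0 (EP l) (P_gt0 l)
  x_sol x_le1 x0Pl.
near=> t.
have t0 : 0 <= t by near: t; apply: nbhs_pinfty_ge; rewrite num_real.
have small1 : decay g1 t < k * (e / 2).
  by near: t; apply: near_decay_lt => //; rewrite mulr_gt0 ?divr_gt0.
have small2 : decay g2 t < e by near: t; exact: near_decay_lt.
have Pl1 := steady_lt1 (ltW (eps_gt0 l)) (fun i => ltW (P_gt0 l i)) (EP l) j.
rewrite distrC ltr_norml; apply/andP; split.
  have [psj|] := ltP 0 (ps j); last by have := x_ge0 t t0 j; lra.
  have := lower t t0 j psj; have := ps_lt1 j; have := decay_gt0 (ltW g20) t0; nra.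
have : k^-1 * decay g1 t < e / 2 by rewrite ltr_pdivrMl.
have := upper t t0 j; have := Pl j; have := decay_gt0 (ltW g10) t0; have := P_gt0 l j.
nra.
Unshelve. all: by end_near.
Qed.

Lemma steady_limit_stable : is_stable_equilibrium B lam del q s ps.
Proof.
have cube_ge0 x : in_unit_cube (x 0) -> forall j, 0 <= x 0 j.
  by move=> x_cube j; case/andP: (x_cube j).
split; [split|split].
- by move=> j; rewrite ps_ge0 ltW ?ps_lt1.
- by move=> j; rewrite (sis_field_steady j Eps) mulr0 oppr0.
- move=> e e0; have [d d0 stab] := steady_limit_lyapunov e0.
  by exists d => // x x_sol /cube_ge0; exact: stab.
have [d d0 attr] := steady_limit_attractive.
by exists d => // x x_sol /cube_ge0; exact: attr.
Qed.
End SteadyLimit.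
End Model.

Theorem proposition3 (R : realType) (N : nat)
  (B : 'I_N -> 'I_N -> R) (lam del : 'I_N -> R) (q : 'I_N -> R -> R)
  (S : set ('I_N -> R)) (s : 'I_N -> R)
  (pbar : 'I_N -> R) (pbar_eps : R -> 'I_N -> R) :
  (forall i j, 0 <= B i j) ->
  (forall i, B i i = 0) ->
  weakly_connected B ->
  (forall i, 0 <= lam i) ->
  (forall i, 0 < del i) ->
  (forall i (x : R), 0 <= x -> 0 < q i x <= 1) ->
  (forall i (x y : R), 0 <= x -> x < y -> q i y < q i x) ->
  (forall i (x y t : R), 0 <= x -> 0 <= y -> x != y -> 0 < t < 1 ->
     q i (t * x + (1 - t) * y) < t * q i x + (1 - t) * q i y) ->
  (forall i, {within `[0, +oo[, continuous (q i)}) ->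
  (forall i (x : R), 0 < x -> derivable (q i) x 1) ->
  (forall i (x : R), 0 < x -> {for x, continuous (derive1 (q i))}) ->
  (forall p, S p -> forall i, 0 <= p i) ->
  (forall p p' (t : R), S p -> S p' -> 0 <= t <= 1 ->
     S (fun i => t * p i + (1 - t) * p' i)) ->
  S s ->
  (* pbar is the unique stable equilibrium of the ODE for this s *)
  is_stable_equilibrium B lam del q s pbar ->
  (forall p, is_stable_equilibrium B lam del q s p -> p = pbar) ->
  (* pbar_eps e is the unique strictly positive solution with lam + e 1 *)
  (forall e : R, 0 < e ->
     (forall i, 0 < pbar_eps e i) /\
     eq_equation B (fun i => lam i + e) del q s (pbar_eps e)) ->
  (forall e : R, 0 < e -> forall p, (forall i, 0 < p i) ->
     eq_equation B (fun i => lam i + e) del q s p -> p = pbar_eps e) ->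
  forall eps : nat -> R,
    (forall l, 0 < eps l) ->
    (forall l, eps l.+1 < eps l) ->
    eps @ \oo --> 0 ->
    forall i, (fun l => pbar_eps (eps l) i) @ \oo --> pbar i.
Proof.
move=> B_ge0 _ _ lam_ge0 del_gt0 q_range _ _ _ _ _ S_ge0 _ Ss _ pbar_uniq pbar_eps_spec _
  eps eps_gt0 eps_dec eps_cvg.
have q_gt0 i : 0 < q i (s i) by have /andP [] := q_range i _ (S_ge0 s Ss i).
have EP l := eq_equation_steady q_gt0 (pbar_eps_spec _ (eps_gt0 l)).2.
have P_gt0 l := (pbar_eps_spec _ (eps_gt0 l)).1.
have [ps [Eps ps_ge0 P_gt_ps P_cvg]] :=
  steady_seq_limit B_ge0 lam_ge0 del_gt0 q_gt0 eps_gt0 eps_dec eps_cvg EP P_gt0.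
have ps_stable := steady_limit_stable B_ge0 lam_ge0 del_gt0 q_gt0 Eps ps_ge0 eps_gt0 EP
  P_gt_ps P_cvg.
by rewrite -(pbar_uniq ps ps_stable).
Qed.
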